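(* Consider the system for scalar functions $p(z),q(z)$ \[ p'''= 3pp'+3q'+zp'+2p,\qquad q'''= 12pq'+6p'q+3p''+4zq'-2q. \] (i) This system admits the isomonodromic Lax representation ${\cal A}'={\cal B}_\zeta+[{\cal B},{\cal A}]$ (identically in the spectral parameter $\zeta$) with the $5\times5$ matrices \[ {\cal A}={\cal A}_0+\frac{1}{\zeta}{\cal A}_{-1},\qquad {\cal A}_{-1}= \begin{pmatrix} 0 & 0 & p+z & 0 & -1 \\ 0 & 0 & 0 & 0 & 0 \\ -p''+2p(p+z)+2q & 0 & p' & -2p & 0 \\ p'(p+z)-q' & 0 & 2q & -p' & 0 \\ p''(p+z)+p'+4pq-q'' & 0 & q' & 2q-p'' & 0 \end{pmatrix}, \] \[ {\cal A}_0= \begin{pmatrix} 0 & p+z-\zeta^2 & -\zeta & 0 & 0 \\ p+z-\zeta^2 & 0 & 0 & -1 & 0 \\ -2p\zeta & p' & 0 & 0 & 0 \\ -p'\zeta & 2q & 0 & 0 & 0 \\ (2q-p'')\zeta & q' & 0 & 0 & 0 \end{pmatrix},\qquad {\cal B}= \begin{pmatrix} 0 & \zeta & 1 & 0 & 0 \\ \zeta & 0 & 0 & 0 & 0 \\ 2p & 0 & 0 & 1 & 0 \\ p' & 0 & 0 & 0 & 1 \\ p''-2q & 0 & 1 & 3p+z & 0 \end{pmatrix}. \] (ii) The following quantities are first integrals of the system: \[ H_1=q''-6pq+2zq-2(p+z)p''+(p')^2-p'+2p(p+z)^2, \] \[ H_2= 2q(p''-2q)^2-2q'(p'p''-2p'q-pq')+((p')^2-4pq)(q''-p'-6pq-2zq).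 \]
   Context: Primes denote derivatives with respect to $z$; $\zeta$ is a spectral parameter independent of $z$. ''Admits the Lax representation'' means that the matrix equation ${\cal A}'={\cal B}_\zeta+[{\cal B},{\cal A}]$ holds by virtue of the system. *)

From Stdlib Require Import Reals.
From Coquelicot Require Import Coquelicot.
Open Scope R_scope.

(* 5x5 real matrices, indexed by 0..4 (row, column). *)
Definition mat := nat -> nat -> R.

Definition matmul (M N : mat) : mat :=
  fun i j => sum_f_R0 (fun k => M i k * N k j) 4.

Definition comm (M N : mat) : mat :=
  fun i j => matmul M N i j - matmul N M i j.

Section LaxMatrices.
Variables p q : R -> R.

Definition d1 (f : R -> R) (z : R) := Derive_n f 1 z.
Definition d2 (f : R -> R) (z : R) := Derive_n f 2 z.

Definition Am1 (z : R) : mat := fun i j =>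
  let P := p z in let P1 := d1 p z in let P2 := d2 p z in
  let Q := q z in let Q1 := d1 q z in let Q2 := d2 q z in
  match i, j with
  | 0%nat, 2%nat => P + z
  | 0%nat, 4%nat => -1
  | 2%nat, 0%nat => - P2 + 2 * P * (P + z) + 2 * Q
  | 2%nat, 2%nat => P1
  | 2%nat, 3%nat => -2 * P
  | 3%nat, 0%nat => P1 * (P + z) - Q1
  | 3%nat, 2%nat => 2 * Q
  | 3%nat, 3%nat => - P1
  | 4%nat, 0%nat => P2 * (P + z) + P1 + 4 * P * Q - Q2
  | 4%nat, 2%nat => Q1
  | 4%nat, 3%nat => 2 * Q - P2
  | _, _ => 0
  end.

Definition A0 (z zeta : R) : mat := fun i j =>
  let P := p z in let P1 := d1 p z in let P2 := d2 p z in
  let Q := q z in let Q1 := d1 q z in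
  match i, j with
  | 0%nat, 1%nat => P + z - zeta ^ 2
  | 0%nat, 2%nat => - zeta
  | 1%nat, 0%nat => P + z - zeta ^ 2
  | 1%nat, 3%nat => -1
  | 2%nat, 0%nat => -2 * P * zeta
  | 2%nat, 1%nat => P1
  | 3%nat, 0%nat => - P1 * zeta
  | 3%nat, 1%nat => 2 * Q
  | 4%nat, 0%nat => (2 * Q - P2) * zeta
  | 4%nat, 1%nat => Q1
  | _, _ => 0
  end.

Definition LaxA (z zeta : R) : mat := fun i j =>
  A0 z zeta i j + / zeta * Am1 z i j.

Definition LaxB (z zeta : R) : mat := fun i j =>
  let P := p z in let P1 := d1 p z in let P2 := d2 p z in
  let Q := q z in
  match i, j with
  | 0%nat, 1%nat => zeta
  | 0%nat, 2%nat => 1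
  | 1%nat, 0%nat => zeta
  | 2%nat, 0%nat => 2 * P
  | 2%nat, 3%nat => 1
  | 3%nat, 0%nat => P1
  | 3%nat, 4%nat => 1
  | 4%nat, 0%nat => P2 - 2 * Q
  | 4%nat, 2%nat => 1
  | 4%nat, 3%nat => 3 * P + z
  | _, _ => 0
  end.

Definition H1 (z : R) : R :=
  let P := p z in let P1 := d1 p z in let P2 := d2 p z in
  let Q := q z in let Q2 := d2 q z in
  Q2 - 6 * P * Q + 2 * z * Q - 2 * (P + z) * P2 + P1 ^ 2 - P1
  + 2 * P * (P + z) ^ 2.

Definition H2 (z : R) : R :=
  let P := p z in let P1 := d1 p z in let P2 := d2 p z in
  let Q := q z in let Q1 := d1 q z in let Q2 := d2 q z in
  2 * Q * (P2 - 2 * Q) ^ 2 - 2 * Q1 * (P1 * P2 - 2 * P1 * Q - P * Q1)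
  + (P1 ^ 2 - 4 * P * Q) * (Q2 - P1 - 6 * P * Q - 2 * z * Q).

End LaxMatrices.

Definition thrice_diff (f : R -> R) : Prop :=
  forall (n : nat) (z : R), (n <= 3)%nat -> ex_derive_n f n z.

Definition solves_system (p q : R -> R) : Prop :=
  forall z : R,
    Derive_n p 3 z = 3 * p z * Derive_n p 1 z + 3 * Derive_n q 1 z
                     + z * Derive_n p 1 z + 2 * p z /\
    Derive_n q 3 z = 12 * p z * Derive_n q 1 z + 6 * Derive_n p 1 z * q z
                     + 3 * Derive_n p 2 z + 4 * z * Derive_n q 1 z - 2 * q z.

(** Along a solution every quantity involved is a polynomial in [z], the jet
    [p, p', p'', q, q', q''] and, for the entries of [A], in [zeta] and
    [1 / zeta].  Differentiating in [z] introduces only [p'''] and [q'''],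
    which the system expresses through the jet; after this substitution the
    Lax equation (where [B_zeta] is the constant matrix [E_01 + E_10]) and
    [H1' = H2' = 0] become identities between rational functions of
    independent variables. *)

From Stdlib Require Import Reals Lia.
From Coquelicot Require Import Coquelicot.
(* Imported last: Stdlib's Reals also defines a [d1]. *)
Open Scope R_scope.

Section Jet.

Variable f : R -> R.

Hypothesis f_diff : thrice_diff f.

Lemma ex_derive_d0 (z : R) : ex_derive f z.
Proof. exact (f_diff 1%nat z ltac:(lia)). Qed.

Lemma ex_derive_d1 (z : R) : ex_derive (d1 f) z.
Proof. exact (f_diff 2%nat z ltac:(lia)). Qed.

Lemma ex_derive_d2 (z : R) : ex_derive (d2 f) z.
Proof. exact (f_diff 3%nat z ltac:(lia)). Qed.

End Jet.

Lemma constant_of_is_derive_0 (f : R -> R) :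
  (forall z, is_derive f z 0) -> forall z1 z2, f z1 = f z2.
Proof.
intros f'0 z1 z2.
destruct (Rtotal_order z1 z2) as [lt12 | [-> | lt21]].
- apply eq_is_derive; auto.
- reflexivity.
- symmetry; apply eq_is_derive; auto.
Qed.

Definition LaxB_zeta : mat := fun i j =>
  match i, j with
  | 0%nat, 1%nat | 1%nat, 0%nat => 1
  | _, _ => 0
  end.

Lemma Derive_LaxB_zeta (p q : R -> R) (z zeta : R) (i j : nat) :
  Derive (fun y => LaxB p q z y i j) zeta = LaxB_zeta i j.
Proof.
destruct i as [|[|[|[|[|i]]]]], j as [|[|[|[|[|j]]]]];
  cbv beta iota zeta delta [LaxB LaxB_zeta];
  first [apply Derive_const | apply Derive_id].
Qed.

Section Solution.

Variables p q : R -> R.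
Hypothesis p_diff : thrice_diff p.
Hypothesis q_diff : thrice_diff q.
Hypothesis pq_sol : solves_system p q.

Lemma Derive_n_3_p (z : R) :
  Derive_n p 3 z = 3 * p z * d1 p z + 3 * d1 q z + z * d1 p z + 2 * p z.
Proof. exact (proj1 (pq_sol z)). Qed.

Lemma Derive_n_3_q (z : R) :
  Derive_n q 3 z =
  12 * p z * d1 q z + 6 * d1 p z * q z + 3 * d2 p z + 4 * z * d1 q z - 2 * q z.
Proof. exact (proj2 (pq_sol z)). Qed.

Ltac solve_ex_derive_jet :=
  repeat split;
  lazymatch goal with
  | |- ex_derive (fun x => d2 ?f x) _ => apply ex_derive_d2
  | |- ex_derive (fun x => d1 ?f x) _ => apply ex_derive_d1
  | |- ex_derive (fun x => ?f x) _ => apply ex_derive_d0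
  end;
  assumption.

Ltac eliminate_jet_derivatives :=
  repeat match goal with
  | |- context [Derive (fun x => d2 ?f x) ?z] =>
      change (Derive (fun x => d2 f x) z) with (Derive_n f 3 z)
  | |- context [Derive (fun x => d1 ?f x) ?z] =>
      change (Derive (fun x => d1 f x) z) with (d2 f z)
  | |- context [Derive (fun x => ?f x) ?z] =>
      change (Derive (fun x => f x) z) with (d1 f z)
  end;
  rewrite ?Derive_n_3_p, ?Derive_n_3_q.

Lemma is_derive_H1 (z : R) : is_derive (H1 p q) z 0.
Proof.
unfold H1; auto_derive; [solve_ex_derive_jet |].
eliminate_jet_derivatives; ring.
Qed.

Lemma is_derive_H2 (z : R) : is_derive (H2 p q) z 0.
Proof.
unfold H2; auto_derive; [solve_ex_derive_jet |].
eliminate_jet_derivatives; ring.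
Qed.

Lemma lax_equation (z zeta : R) : zeta <> 0 ->
  forall i j : nat, (i < 5)%nat -> (j < 5)%nat ->
    Derive (fun w => LaxA p q w zeta i j) z =
    Derive (fun y => LaxB p q z y i j) zeta
    + comm (LaxB p q z zeta) (LaxA p q z zeta) i j.
Proof.
intros zeta_neq0 i j i_lt5 j_lt5.
rewrite Derive_LaxB_zeta.
destruct i as [|[|[|[|[|i]]]]]; try lia;
destruct j as [|[|[|[|[|j]]]]]; try lia;
cbv beta iota zeta delta [LaxA A0 Am1 LaxB LaxB_zeta comm matmul sum_f_R0];
erewrite is_derive_unique by (auto_derive; first [reflexivity | solve_ex_derive_jet]);
eliminate_jet_derivatives; field; exact zeta_neq0.
Qed.

End Solution.

Theorem proposition4 (p q : R -> R) :
  thrice_diff p -> thrice_diff q -> solves_system p q ->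
  (* (i) Lax representation A' = B_zeta + [B, A], identically in zeta <> 0 *)
  (forall (z zeta : R), zeta <> 0 ->
     forall i j : nat, (i < 5)%nat -> (j < 5)%nat ->
       Derive (fun w => LaxA p q w zeta i j) z =
       Derive (fun y => LaxB p q z y i j) zeta
       + comm (LaxB p q z zeta) (LaxA p q z zeta) i j)
  /\
  (* (ii) H1 and H2 are first integrals (constant along solutions) *)
  (forall z1 z2 : R, H1 p q z1 = H1 p q z2) /\
  (forall z1 z2 : R, H2 p q z1 = H2 p q z2).
Proof.
intros p_diff q_diff pq_sol.
split; [| split].
- exact (lax_equation p q p_diff q_diff pq_sol).
- exact (constant_of_is_derive_0 _ (is_derive_H1 p q p_diff q_diff pq_sol)).
- exact (constant_of_is_derive_0 _ (is_derive_H2 p q p_diff q_diff pq_sol)).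
Qed.
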